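(* For every $\lambda>0$, $\det(D(\lambda)-I)=0$ if and only if $\det\widetilde D(\lambda)=0$, and if and only if $\det\widehat D(\lambda)=0$. Moreover, if $\eta$ is transient, these equivalences also hold for $\lambda=0$.
   Context: CBP setting. $S$ finite or countable; $\eta$ irreducible continuous-time Markov chain on $S$ with conservative infinitesimal matrix $Q=(q(u,v))$ ($q(u,v)\ge0$ for $u\ne v$, $q(u,u)\in(-\infty,0)$, row sums $0$), transition probabilities $p(t;u,v)$. Distinct catalysts $W=\{w_1,\dots,w_N\}\subset S$; for $k\le N$, $\beta_k>0$, $\alpha_k\in[0,1)$, $f_k$ the generating function of a nonnegative integer random variable with $f_k'(1)<\infty$; $G_k^*(\lambda)=\beta_k/(\lambda+\beta_k)$. Hitting times under taboo: for $u,v\in S$, $H\subset S$, ${}_H\overline\tau_{u,v}$ is the time spent by $\eta$ started at $u$, after leaving $u$, until the first hitting of $v$ if $H$ is not visited before; otherwise $\infty$; ${}_H\overline F_{u,v}$ its improper distribution function, ${}_H\overline F^*_{u,v}(\lambda)=\int_{0-}^\infty e^{-\lambda t}d\,{}_H\overline F_{u,v}(t)$, ${}_HF^*_{u,v}(\lambda)=\frac{-q(u,u)}{\lambda-q(u,u)}{}_H\overline F^*_{u,v}(\lambda)$; $F^*_{u,v}:={}_\emptyset F^*_{u,v}$ (no taboo). $W_j=W\setminus\{w_j\}$. $D(\lambda)=(d_{i,j}(\lambda))_{i,j=1}^N$, $d_{i,j}(\lambda)=\delta_{i,j}\alpha_if_i'(1)G_i^*(\lambda)+(1-\alpha_i)G_i^*(\lambda){}_{W_j}\overline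 F^*_{w_i,w_j}(\lambda)$. $G_\lambda(u,v)=\int_0^\infty e^{-\lambda t}p(t;u,v)\,dt$ for $\lambda>0$, and $G_0(u,v)=\lim_{\lambda\to0+}G_\lambda(u,v)$ (Green's function, finite iff $\eta$ is transient). Define $\widetilde D(\lambda)=(\widetilde d_{i,j}(\lambda))$, $\widehat D(\lambda)=(\widehat d_{i,j}(\lambda))$ by $\widetilde d_{i,j}(\lambda)=\Big(\alpha_if_i'(1)G_i^*(\lambda)-1+(1-\alpha_i)G_i^*(\lambda)\frac{\lambda-q(w_i,w_i)}{-q(w_i,w_i)}\Big)F^*_{w_i,w_j}(\lambda)+\delta_{i,j}\big(\alpha_if_i'(1)G_i^*(\lambda)-1\big)\big(1-F^*_{w_i,w_i}(\lambda)\big)$, $\widehat d_{i,j}(\lambda)=\Big(\alpha_if_i'(1)G_i^*(\lambda)-1+(1-\alpha_i)G_i^*(\lambda)\frac{\lambda-q(w_i,w_i)}{-q(w_i,w_i)}\Big)G_\lambda(w_i,w_j)+\delta_{i,j}\frac{1-\alpha_i}{q(w_i,w_i)}G_i^*(\lambda)$. *)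

From HB Require Import structures.
From mathcomp Require Import all_boot all_order all_algebra.
From mathcomp Require Import all_classical all_reals all_analysis.
Set Implicit Arguments. Unset Strict Implicit. Unset Printing Implicit Defensive.
Import Order.TTheory GRing.Theory Num.Theory.
Local Open Scope classical_set_scope.
Local Open Scope ring_scope.

Section CBP.
Variables (R : realType) (S : countType).
Implicit Types (q : S -> S -> R) (lam : R) (H : set S) (u v : S).

Definition conservative q : Prop :=
  [/\ forall u v, u <> v -> 0 <= q u v,
      forall u, q u u < 0 &
      forall u, (\esum_(v in [set v | v <> u]) (q u v)%:E)%E = (- q u u)%:E].

Definition qoff q u v : R := if u == v then 0 else q u v.

Definition irreducible q : Prop :=
  forall u v, exists t : seq S,
    path (fun x y => 0 < qoff q x y) u t /\ last u t = v.

(* Laplace weight of the path x -> s_1 -> ... -> s_n: each visited state x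
   (except the final one) contributes its exponential holding time
   (Laplace transform -q(x,x)/(lam - q(x,x))) times the jump probability
   q(x,y)/(-q(x,x)), i.e. a factor q(x,y)/(lam - q(x,x)). *)
Fixpoint pathw q lam (x : S) (s : seq S) : R :=
  if s is y :: s' then qoff q x y / (lam - q x x) * pathw q lam y s' else 1.

(* {}_H \overline F^*_{u,v}(lam): Laplace transform of the (improper)
   distribution of the time spent by eta started at u, after leaving u,
   until the first hitting of v, on the event that H is not visited before
   (jump chain / holding time representation of the minimal chain). *)
Definition tabooFbar q H u v lam : R :=
  fine (\esum_(t in [set t : seq S | forall x, x \in t -> ~ H x /\ x <> v])
         (match t with
          | [::] => qoff q u v / (- q u u)
          | y :: t' => qoff q u y / (- q u u) * pathw q lam y (rcons t' v)
          end)%:E)%E.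

Definition tabooF q H u v lam : R :=
  (- q u u) / (lam - q u u) * tabooFbar q H u v lam.

Definition Fstar q u v lam : R := tabooF q set0 u v lam.

(* Extended-real Green function / resolvent of the (minimal) chain:
   G_lam(u,v) = \int_0^oo e^{-lam t} p(t;u,v) dt, written as the sum over
   all jump paths u = s_0 -> s_1 -> ... -> s_n = v (n >= 0) of the Laplace weights, times the Laplace
   transform 1/(lam - q(v,v)) of the time spent at v. For lam = 0 this is
   (by monotone convergence) lim_{lam -> 0+} G_lam(u,v). *)
Definition GreenE q lam u v : \bar R :=
  (\esum_(s in [set s : seq S | last u s = v]) (pathw q lam u s / (lam - q v v))%:E)%E.

Definition Green q lam u v : R := fine (GreenE q lam u v).

(* transience: the probability of ever returning to u is < 1, for all u *)
Definition transient q : Prop := forall u, Fstar q u u 0 < 1.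

Definition fprime1 (p : nat -> R) : \bar R :=
  (\esum_(n in [set: nat]) (n%:R * p n)%:E)%E.

Definition is_pmf (p : nat -> R) : Prop :=
  (forall n, 0 <= p n) /\ (\esum_(n in [set: nat]) (p n)%:E)%E = 1%E.

Definition Gstar (beta lam : R) : R := beta / (lam + beta).

Variables (N : nat) (w : 'I_N -> S) (beta alpha : 'I_N -> R)
          (p : 'I_N -> nat -> R).

Definition mf (i : 'I_N) : R := fine (fprime1 (p i)).

Definition Wminus (j : 'I_N) : set S := [set x | exists k, k != j /\ x = w k].

Definition Dmat q lam : 'M[R]_N :=
  \matrix_(i, j)
    ((i == j)%:R * alpha i * mf i * Gstar (beta i) lam
     + (1 - alpha i) * Gstar (beta i) lam * tabooFbar q (Wminus j) (w i) (w j) lam).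

Definition coef q lam (i : 'I_N) : R :=
  alpha i * mf i * Gstar (beta i) lam - 1
  + (1 - alpha i) * Gstar (beta i) lam * ((lam - q (w i) (w i)) / (- q (w i) (w i))).

Definition Dtilde q lam : 'M[R]_N :=
  \matrix_(i, j)
    (coef q lam i * Fstar q (w i) (w j) lam
     + (i == j)%:R * (alpha i * mf i * Gstar (beta i) lam - 1)
                  * (1 - Fstar q (w i) (w i) lam)).

Definition Dhat q lam : 'M[R]_N :=
  \matrix_(i, j)
    (coef q lam i * Green q lam (w i) (w j)
     + (i == j)%:R * ((1 - alpha i) / q (w i) (w i)) * Gstar (beta i) lam).

End CBP.

(* All quantities are sums of Laplace weights of jump paths: F^*_{u,v} over the
   paths u -> v that avoid v in between, K_ij := {}_{W_j}F^*_{w_i,w_j} over the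
   paths w_i -> w_j that avoid all catalysts, G_lam(u,v) over all paths ending
   in v.  Cutting a path w_i -> w_j at its first catalyst gives
   F_ij = K_ij + sum_{k <> j} K_ik F_kj, i.e. (I - K) M = diag(1 - F_jj) where M
   is F with unit diagonal; as D - I = diag(a) + diag(b) K, this yields
   D~ = (D - I) M.  Cutting at the first visit to w_j gives
   G_lam(w_i,w_j) = (delta_ij or F_ij) / ((lam - q(w_j,w_j)) (1 - F_jj)), i.e.
   D^ = D~ diag(...).  Finally F_jj < 1 -- for lam > 0 because a path must first
   leave w_j, whose holding time has transform -q/(lam - q) < 1, and for lam = 0
   by transience -- so M and the diagonal factor are invertible. *)

From Pilot Require Import Defs.
From HB Require Import structures.
From mathcomp Require Import all_boot all_order all_algebra.
From mathcomp Require Import all_classical all_reals all_analysis.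
From mathcomp Require Import ring.
Set Implicit Arguments.
Unset Strict Implicit.
Import Order.TTheory GRing.Theory Num.Theory.
Local Open Scope classical_set_scope.
Local Open Scope ring_scope.

Section esum_complements.
Context {R : realType}.
Local Open Scope ereal_scope.

Lemma le_esum_subset (T : choiceType) (I J : set T) (f : T -> \bar R) :
  I `<=` J -> (forall i, J i -> 0 <= f i) ->
  \esum_(i in I) f i <= \esum_(i in J) f i.
Proof.
move=> IJ f0; apply: ge_ereal_sup => _ [X [fX XI] <-].
by apply: ereal_sup_ubound; exists X => //; split => // x /XI/IJ.
Qed.

Lemma esum_setU (T : choiceType) (I J : set T) (f : T -> \bar R) :
  I `&` J = set0 -> (forall i, (I `|` J) i -> 0 <= f i) ->
  \esum_(i in I `|` J) f i = \esum_(i in I) f i + \esum_(i in J) f i.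
Proof.
move=> IJ0 f0; rewrite (esumID I)// setUK setIUl setICr set0U -setDE.
by congr (_ + esum _ _); apply/setDidPl; rewrite setIC.
Qed.

Lemma ge0_esumZl (T : choiceType) (I : set T) (x : \bar R) (f : T -> \bar R) :
  0 <= x -> (forall i, I i -> 0 <= f i) ->
  \esum_(i in I) (x * f i) = x * \esum_(i in I) f i.
Proof.
move=> + f0; case: x => [r||//]; rewrite ?lee_fin => x0.
- move: x0; rewrite le0r => /predU1P[->|r0].
    by rewrite mul0e esum1// => i _; rewrite mul0e.
  have distr X : fsets I X ->
      \sum_(i \in X) (r%:E * f i) = r%:E * \sum_(i \in X) f i.
    move=> [fX XI]; rewrite !fsbig_finite// big_seq_cond [in RHS]big_seq_cond.
    rewrite ge0_sume_distrr// => i /andP[+ _]; rewrite in_fset_set// inE.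
    by move/XI; exact: f0.
  rewrite /esum -ereal_sup_pZl//; congr ereal_sup; apply/seteqP; split.
    move=> _ [X IX <-]; exists (\sum_(i \in X) f i); first by exists X.
    by rewrite distr.
  by move=> _ [_ [X IX <-] <-]; exists X => //; rewrite distr.
- have [[i Ii fi0]|nopos] := pselect (exists2 i, I i & 0 < f i).
    have sum_gt0 : 0 < \esum_(i in I) f i.
      apply: (lt_le_trans fi0); rewrite -esum_set1; last exact: ltW.
      by apply: le_esum_subset => // j ->.
    rewrite gt0_mulye//; apply/eqP; rewrite eq_le leey /=.
    apply: esum_ge; exists [set i]; first by split; [exact: finite_set1|move=> j ->].
    by rewrite fsbig_set1 gt0_mulye.
  have f_eq0 i : I i -> f i = 0.
    move=> Ii; apply/eqP; rewrite eq_le f0// andbT leNgt; apply/negP => ?.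
    by apply: nopos; exists i.
  rewrite !esum1 ?mule0// => i Ii; by rewrite f_eq0 ?mule0.
Qed.

Lemma ge0_esum_setX (T1 T2 : choiceType) (A : set T1) (B : set T2)
    (f : T1 -> \bar R) (g : T2 -> \bar R) :
  (forall a, A a -> 0 <= f a) -> (forall b, B b -> 0 <= g b) ->
  \esum_(k in A `*` B) (f k.1 * g k.2)
  = (\esum_(a in A) f a) * (\esum_(b in B) g b).
Proof.
move=> f0 g0; have -> : A `*` B = A `*`` (fun _ => B) by [].
rewrite -(esum_esum (a := fun a b => f a * g b)); last first.
  by move=> a b Aa Bb; rewrite mule_ge0 ?f0 ?g0.
under eq_esum => a Aa do rewrite ge0_esumZl ?f0// muleC.
by rewrite ge0_esumZl ?esum_ge0// muleC.
Qed.

Lemma esum_le_trunc (T : choiceType) (I : set T) (m : T -> nat)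
    (f : T -> \bar R) (c : \bar R) :
  (forall n, \esum_(i in I `&` [set i | (m i < n)%N]) f i <= c) ->
  \esum_(i in I) f i <= c.
Proof.
move=> trunc_le; apply: ge_ereal_sup => _ [X [fX XI] <-].
have [n Xn] : exists n, forall i, X i -> (m i < n)%N.
  move/finite_fsetP: fX => [B ->].
  exists (\max_(i <- finmap.enum_fset B) m i).+1 => i /= iB.
  by rewrite ltnS; apply: (@leq_bigmax_seq _ _ xpredT m i iB).
apply: le_trans (trunc_le n); apply: ereal_sup_ubound; exists X => //.
by split => // i Xi; split; [exact: XI|exact: Xn].
Qed.

End esum_complements.

Section path_sums.
Context {R : realType} {S : countType} (q : S -> S -> R) (lam : R).
Hypothesis qdiag_lt0 : forall u, q u u < 0.
Hypothesis qoffdiag_ge0 : forall u v, u <> v -> 0 <= q u v.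
Hypothesis lam_ge0 : 0 <= lam.
Hypothesis q_conservative : forall u,
  (\esum_(v in [set v | v <> u]) (q u v)%:E)%E = (- q u u)%:E.
Implicit Types (A B C Z : set S) (Y : set (seq S)) (u v : S) (t : seq S).

Local Notation pw := (pathw q lam).
Local Notation rho u v := (qoff q u v / (lam - q u u)).
(* Laplace transform of the holding time in u *)
Local Notation hold u := (- q u u / (lam - q u u)).

Lemma lam_subq_gt0 u : 0 < lam - q u u.
Proof. by rewrite subr_gt0 (lt_le_trans (qdiag_lt0 u)). Qed.

Lemma qoff_ge0 u v : 0 <= qoff q u v.
Proof. by rewrite /qoff; case: eqP => // /eqP ?; apply: qoffdiag_ge0; apply/eqP. Qed.

Lemma jump_weight_ge0 u v : 0 <= rho u v.
Proof. by rewrite divr_ge0 ?qoff_ge0 ?ltW ?lam_subq_gt0. Qed.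

Lemma pathw_ge0 u s : 0 <= pw u s.
Proof. by elim: s u => [|y s IH] u //=; rewrite mulr_ge0 ?jump_weight_ge0. Qed.

Lemma pathw_cat u s1 s2 : pw u (s1 ++ s2) = pw u s1 * pw (last u s1) s2.
Proof. by elim: s1 u => [|y s IH] u /=; rewrite ?mul1r // IH mulrA. Qed.

Lemma pathw_rcons_cat u t1 z t2 v :
  pw u (rcons (t1 ++ z :: t2) v) = pw u (rcons t1 z) * pw z (rcons t2 v).
Proof. by rewrite rcons_cat -cat_rcons pathw_cat last_rcons. Qed.

Definition seqs_in (A : set S) : set (seq S) :=
  [set t : seq S | forall x : S, x \in t -> A x].

Definition pathsum (Y : set (seq S)) u v : \bar R :=
  (\esum_(t in Y) (pw u (rcons t v))%:E)%E.

Local Notation taboo A := (pathsum (seqs_in A)).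

(* Paths cut at their first exit from A, when Z and A are disjoint. *)
Definition splice (Z A : set S) (Y : set (seq S)) : set (seq S) :=
  [set p.2.1 ++ p.1 :: p.2.2 | p in Z `*` (seqs_in A `*` Y)].

Lemma seqs_in_set0 : seqs_in set0 = [set [::]].
Proof.
apply/seteqP; split => [[|x t]//= h|t -> x //].
by exfalso; apply: (h x); rewrite mem_head.
Qed.

Lemma seqs_inT : seqs_in setT = setT.
Proof. by apply/seteqP; split => t //= _ x. Qed.

Lemma seqs_in_cat A t1 t2 :
  seqs_in A (t1 ++ t2) <-> seqs_in A t1 /\ seqs_in A t2.
Proof.
split=> [h|[h1 h2] x]; last by rewrite mem_cat => /orP[/h1|/h2].
by split=> x xt; apply: h; rewrite mem_cat xt ?orbT.
Qed.

Lemma first_exit A t : ~ seqs_in A t ->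
  exists t1 z t2, [/\ t = t1 ++ z :: t2, seqs_in A t1 & ~ A z].
Proof.
elim: t => [|x t IH] nt; first by exfalso; apply: nt.
have [Ax|nAx] := pselect (A x); last by exists [::], x, t.
have [|t1 [z [t2 [-> t1A nAz]]]] := IH.
  by move=> tA; apply: nt => y; rewrite in_cons => /predU1P[->|/tA].
exists (x :: t1), z, t2; split => // y.
by rewrite in_cons => /predU1P[->|/t1A].
Qed.

Lemma first_exit_uniq A t1 z t2 t1' z' t2' :
  seqs_in A t1 -> ~ A z -> seqs_in A t1' -> ~ A z' ->
  t1 ++ z :: t2 = t1' ++ z' :: t2' -> [/\ t1 = t1', z = z' & t2 = t2'].
Proof.
elim: t1 t1' => [|x t1 IH] [|x' t1'] /= t1A nAz t1A' nAz' //.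
- by case=> -> ->.
- by case=> zx; exfalso; apply: nAz; rewrite zx; apply: t1A'; rewrite mem_head.
- by case=> zx; exfalso; apply: nAz'; rewrite -zx; apply: t1A; rewrite mem_head.
case=> -> /IH[] // => [y yt|y yt|-> -> ->//].
- by apply: t1A; rewrite in_cons yt orbT.
- by apply: t1A'; rewrite in_cons yt orbT.
Qed.

Lemma splice_inj Z A Y : (forall z, Z z -> ~ A z) ->
  set_inj (Z `*` (seqs_in A `*` Y)) (fun p => p.2.1 ++ p.1 :: p.2.2).
Proof.
move=> ZA [z [t1 t2]] [z' [t1' t2']]; rewrite !inE /=.
move=> [/ZA nAz [t1A _]] [/ZA nAz' [t1A' _]].
by case/(first_exit_uniq t1A nAz t1A' nAz') => -> -> ->.
Qed.

Lemma seqs_in_splice_disj Z A B Y : (forall z, Z z -> ~ A z) ->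
  seqs_in A `&` splice Z B Y = set0.
Proof.
move=> ZA; apply/seteqP; split => // t [tA [[z [t1 t2]] [/= /ZA nAz _] et]].
by apply: nAz; apply: tA; rewrite -et mem_cat mem_head orbT.
Qed.

Lemma seqs_in_first_exit A B : A `<=` B ->
  seqs_in B = seqs_in A `|` splice (B `\` A) A (seqs_in B).
Proof.
move=> AB; apply/seteqP; split=> [t tB|t [tA x /tA/AB//|]].
  have [tA|ntA] := pselect (seqs_in A t); [by left|right].
  have [t1 [z [t2 [et t1A nAz]]]] := first_exit ntA.
  move: tB; rewrite et => /seqs_in_cat[_ zt2B].
  exists (z, (t1, t2)) => //; split.
    by split => //; apply: zt2B; rewrite mem_head.
  by split => // x xt2; apply: zt2B; rewrite in_cons xt2 orbT.
move=> [[z [t1 t2]] [/= [Bz _] [t1A t2B]] <-].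
apply/seqs_in_cat; split => [x /t1A/AB//|x]; rewrite in_cons.
by case/predU1P => [->//|/t2B].
Qed.

Lemma splice_set0 C Y : splice C set0 Y = [set x :: t | x in C & t in Y].
Proof.
rewrite /splice seqs_in_set0; apply/seteqP; split.
  by move=> _ [[z [t1 t2]] [/= Cz [-> Yt]] <-]; exists z => //; exists t2.
by move=> _ [z Cz [t Yt <-]]; exists (z, ([::], t)).
Qed.

Local Open Scope ereal_scope.

Lemma pathsum_ge0 Y u v : 0 <= pathsum Y u v.
Proof. by apply: esum_ge0 => t _; rewrite lee_fin pathw_ge0. Qed.

Lemma le_pathsum_subset Y Y' u v : Y `<=` Y' -> pathsum Y u v <= pathsum Y' u v.
Proof. by move=> YY'; apply: le_esum_subset => // t _; rewrite lee_fin pathw_ge0. Qed.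

Lemma pathsum_setU Y Y' u v : Y `&` Y' = set0 ->
  pathsum (Y `|` Y') u v = pathsum Y u v + pathsum Y' u v.
Proof. by move=> YY'; apply: esum_setU => // t _; rewrite lee_fin pathw_ge0. Qed.

Lemma pathsum_splice Z A Y u v : (forall z, Z z -> ~ A z) ->
  pathsum (splice Z A Y) u v = \esum_(z in Z) (taboo A u z * pathsum Y z v).
Proof.
move=> ZA; rewrite /pathsum esum_image; last exact: splice_inj.
have -> : Z `*` (seqs_in A `*` Y) = Z `*`` (fun _ => seqs_in A `*` Y) by [].
rewrite -(esum_esum (a := fun z p => (pw u (rcons (p.1 ++ z :: p.2) v))%:E));
  last by move=> *; rewrite lee_fin pathw_ge0.
apply: eq_esum => z _ /=; under eq_esum do rewrite pathw_rcons_cat EFinM.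
by rewrite -ge0_esum_setX // => *; rewrite lee_fin pathw_ge0.
Qed.

Lemma taboo_set0 u v : taboo set0 u v = (rho u v)%:E.
Proof.
by rewrite /pathsum seqs_in_set0 esum_set1 ?lee_fin ?pathw_ge0 //= mulr1.
Qed.

Lemma taboo_first_exit A B u v : A `<=` B ->
  taboo B u v = taboo A u v + \esum_(z in B `\` A) (taboo A u z * taboo B z v).
Proof.
move=> AB; rewrite {1}(seqs_in_first_exit AB) pathsum_setU; last first.
  by apply: seqs_in_splice_disj => z [].
by rewrite pathsum_splice // => z [].
Qed.

Lemma seqs_in_size_ltS C n :
  seqs_in C `&` [set t | (size t < n.+1)%N]
  = seqs_in set0 `|` splice C set0 (seqs_in C `&` [set t | (size t < n)%N]).
Proof.
rewrite splice_set0 seqs_in_set0; apply/seteqP; split.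
  move=> [|x t] [/= tC szt]; [by left|right].
  exists x; first by apply: tC; rewrite mem_head.
  by exists t => //; split => // y yt; apply: tC; rewrite in_cons yt orbT.
move=> t [->|[x Cx [t' [t'C szt'] <-]]]; first by [].
by split => //= y; rewrite in_cons => /predU1P[->|/t'C].
Qed.

Lemma hold_le1 u : (hold u <= 1)%R.
Proof. by rewrite ler_pdivrMr ?lam_subq_gt0 // mul1r lerDr. Qed.

Lemma jump_weights_sum u : \esum_(y in [set: S]) (rho u y)%:E = (hold u)%:E.
Proof.
under eq_esum do rewrite mulrC EFinM.
rewrite ge0_esumZl; last 2 first.
- by rewrite lee_fin invr_ge0 ltW ?lam_subq_gt0.
- by move=> y _; rewrite lee_fin qoff_ge0.
rewrite (esumID [set y | y <> u]); last by move=> y _; rewrite lee_fin qoff_ge0.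
rewrite [X in _ + X]esum1; last by move=> y [_ /= /contrapT ->]; rewrite /qoff eqxx.
rewrite adde0 setTI (eq_esum (b := fun y => (q u y)%:E)); last first.
  by move=> y /= yu; rewrite /qoff; case: eqP => // /esym.
by rewrite q_conservative -EFinM mulrC.
Qed.

Lemma jump_weights_split u v :
  (rho u v)%:E + \esum_(z in ~` [set v]) (rho u z)%:E = (hold u)%:E.
Proof.
rewrite -jump_weights_sum [RHS](esumID [set v]);
  last by move=> *; rewrite lee_fin jump_weight_ge0.
by rewrite !setTI esum_set1 // lee_fin jump_weight_ge0.
Qed.

(* The a priori bound making all taboo sums finite, proved on paths of bounded
   length. *)
Lemma taboo_hit_le u v : taboo (~` [set v]) u v <= (hold u)%:E.
Proof.
apply: (esum_le_trunc (m := size)) => n; elim: n u => [|n IH] u.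
  by rewrite esum1 ?lee_fin ?divr_ge0 ?oppr_ge0 ?ltW ?lam_subq_gt0 // => t [].
rewrite seqs_in_size_ltS -/(pathsum _ u v) pathsum_setU; last first.
  by apply: seqs_in_splice_disj => z _ [].
rewrite taboo_set0 pathsum_splice => [|z _ []//].
rewrite -(jump_weights_split u v) leeD2l //.
apply: le_esum => z _; rewrite taboo_set0 -[leRHS]mule1.
rewrite lee_wpmul2l ?lee_fin ?jump_weight_ge0 //.
by apply: le_trans (IH z) _; rewrite lee_fin hold_le1.
Qed.

Lemma taboo_fin_num A u v : A `<=` ~` [set v] -> taboo A u v \is a fin_num.
Proof.
move=> Av; rewrite ge0_fin_numE ?pathsum_ge0 //.
apply: le_lt_trans (ltry (hold u)); apply: le_trans (taboo_hit_le u v).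
by apply: le_pathsum_subset => t tA x /tA/Av.
Qed.

Local Close Scope ereal_scope.

Lemma tabooF_taboo H u v :
  tabooF q H u v lam = fine (taboo [set x | ~ H x /\ x <> v] u v).
Proof.
have q_neq0 : q u u != 0 by rewrite lt_eqF ?qdiag_lt0.
have a_neq0 : lam - q u u != 0 by rewrite gt_eqF ?lam_subq_gt0.
rewrite /tabooF /tabooFbar (eq_esum (b := fun t =>
  ((lam - q u u) / (- q u u))%:E * (pw u (rcons t v))%:E)%E); last first.
  by move=> [|y t] _ /=; rewrite -EFinM; congr EFin; field; rewrite q_neq0 a_neq0.
rewrite ge0_esumZl ?lee_fin ?divr_ge0 ?oppr_ge0 ?ltW ?lam_subq_gt0 ?qdiag_lt0 //;
  last by move=> *; rewrite lee_fin pathw_ge0.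
rewrite -/(pathsum _ u v) fineM ?taboo_fin_num // => [|x []//] /=.
rewrite mulrA.
have -> : hold u * ((lam - q u u) / - q u u) = 1 by field; rewrite q_neq0 a_neq0.
by rewrite mul1r.
Qed.

Lemma Fstar_taboo u v : Fstar q u v lam = fine (taboo (~` [set v]) u v).
Proof.
rewrite /Fstar tabooF_taboo; congr (fine (pathsum (seqs_in _) _ _)).
by apply/seteqP; split => x /=; [case|split].
Qed.

Lemma Fstar_le_hold u v : Fstar q u v lam <= hold u.
Proof.
by rewrite Fstar_taboo -lee_fin fineK ?taboo_hit_le ?taboo_fin_num.
Qed.

Local Open Scope ereal_scope.

Lemma taboo_first_visit u v : taboo setT u v
  = taboo (~` [set v]) u v + taboo (~` [set v]) u v * taboo setT v v.
Proof.
rewrite (@taboo_first_exit (~` [set v])) // setTD setCK esum_set1 //.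
by rewrite mule_ge0 ?pathsum_ge0.
Qed.

Lemma visits_ltS v n : [set t | (count_mem v t < n.+1)%N] `<=`
  seqs_in (~` [set v]) `|` splice [set v] (~` [set v]) [set t | (count_mem v t < n)%N].
Proof.
move=> t tv; have [|ntv] := pselect (seqs_in (~` [set v]) t); [by left|right].
have [t1 [z [t2 [et t1v /contrapT zv]]]] := first_exit ntv.
exists (z, (t1, t2)) => //; split => //; split => //=.
have t1v0 : count_mem v t1 = 0%N by apply/count_memPn/negP => /t1v /(_ erefl).
by move: tv; rewrite /= et count_cat /= zv eqxx t1v0.
Qed.

Lemma taboo_setT_le v (phi : R) : taboo (~` [set v]) v v = phi%:E -> (phi < 1)%R ->
  taboo setT v v <= (phi / (1 - phi))%:E.
Proof.
move=> Fvv phi_lt1.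
have phi_ge0 : (0 <= phi)%R by rewrite -lee_fin -Fvv pathsum_ge0.
have one_sub_gt0 : (0 < 1 - phi)%R by rewrite subr_gt0.
rewrite /pathsum seqs_inT; apply: (esum_le_trunc (m := count_mem v)) => n.
rewrite setTI -/(pathsum [set t | (count_mem v t < n)%N] v v).
elim: n => [|n IH].
  by rewrite /pathsum esum1 ?lee_fin ?divr_ge0 ?phi_ge0 ?ltW // => t /=.
apply: (le_trans (le_pathsum_subset v v (@visits_ltS v n))).
have v_notin : forall z, [set v] z -> ~ (~` [set v]) z by move=> z -> /(_ erefl).
rewrite pathsum_setU; last exact: seqs_in_splice_disj.
rewrite pathsum_splice // esum_set1 ?mule_ge0 ?pathsum_ge0 // Fvv.
apply: (@le_trans _ _ (phi%:E + phi%:E * (phi / (1 - phi))%:E)).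
  by rewrite leeD2l // lee_wpmul2l // lee_fin.
rewrite -EFinM -EFinD (_ : phi + _ = phi / (1 - phi))%R //.
by field; rewrite gt_eqF.
Qed.

Lemma GreenE_taboo u v : GreenE q lam u v
  = ((lam - q v v)^-1)%:E * ((u == v)%:R%:E + taboo setT u v).
Proof.
have paths : [set s | last u s = v]
    = [set s | s = [::] /\ u = v] `|` [set rcons t v | t in [set: seq S]].
  apply/seteqP; split => s /=.
    by case/lastP: s => [/= ->|t x]; [left|rewrite last_rcons => ->; right; exists t].
  by move=> [[-> ->]|[t _ <-]]; rewrite ?last_rcons.
rewrite /GreenE; under eq_esum do rewrite mulrC EFinM.
rewrite ge0_esumZl; last 2 first.
- by rewrite lee_fin invr_ge0 ltW ?lam_subq_gt0.
- by move=> *; rewrite lee_fin pathw_ge0.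
rewrite paths esum_setU; last 2 first.
- by apply/seteqP; split => // s [[-> _] [[]]].
- by move=> *; rewrite lee_fin pathw_ge0.
rewrite esum_image; last by move=> a b _ _; exact: rcons_injl.
rewrite -seqs_inT; congr (_ * (_ + _)); case: eqP => [<-|uv].
  have -> : [set s : seq S | s = [::] /\ u = u] = [set [::]].
    by apply/seteqP; split => s /=; [case|move=> ->].
  by rewrite esum_set1.
by rewrite esum1 // => s [_ /uv].
Qed.

Lemma Green_eq u v : (Fstar q v v lam < 1)%R ->
  Green q lam u v = ((if u == v then 1 else Fstar q u v lam)
                     / ((lam - q v v) * (1 - Fstar q v v lam)))%R.
Proof.
move=> Fvv_lt1; set phi := Fstar q v v lam.
have Fvv : taboo (~` [set v]) v v = phi%:E.
  by rewrite /phi Fstar_taboo fineK ?taboo_fin_num.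
have one_sub_gt0 : (0 < 1 - phi)%R by rewrite subr_gt0.
have a_gt0 := lam_subq_gt0 v.
have Qv_fin : taboo setT v v \is a fin_num.
  rewrite ge0_fin_numE ?pathsum_ge0 //.
  exact: le_lt_trans (taboo_setT_le Fvv Fvv_lt1) (ltry _).
have Qv_eq : fine (taboo setT v v) = (phi / (1 - phi))%R.
  move: (taboo_first_visit v v); rewrite -(fineK Qv_fin) Fvv -EFinM -EFinD.
  set Qv := fine _ => -[Qv_eq] /=; apply: (mulIf (lt0r_neq0 one_sub_gt0)).
  by rewrite divfK ?gt_eqF // mulrBr mulr1 {1}Qv_eq; ring.
rewrite /Green GreenE_taboo; case: eqP => [->|uv].
  by rewrite -(fineK Qv_fin) -EFinD -EFinM /= Qv_eq; field; rewrite !gt_eqF.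
have -> : taboo setT u v = (Fstar q u v lam * (1 + phi / (1 - phi)))%:E.
  rewrite taboo_first_visit -(fineK Qv_fin) Qv_eq.
  rewrite -[taboo _ u v]fineK ?taboo_fin_num // -Fstar_taboo.
  by rewrite -EFinM -EFinD mulrDr mulr1.
by rewrite add0e -EFinM /=; field; rewrite !gt_eqF.
Qed.

End path_sums.

Section first_entrance_matrices.
Variables (F : fieldType) (N : nat).
Definition setdiag1 (H : 'M[F]_N) : 'M[F]_N :=
  \matrix_(i, j) if i == j then 1 else H i j.

Variables (K H : 'M[F]_N).
Hypothesis first_entrance :
  forall i j, H i j = K i j + \sum_(k | k != j) K i k * H k j.

Lemma mulmx_setdiag1 : K *m setdiag1 H = H.
Proof.
apply/matrixP => i j; rewrite !mxE (bigD1 j) //= !mxE eqxx mulr1 [RHS]first_entrance.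
by congr (_ + _); apply: eq_bigr => k kj; rewrite !mxE (negPf kj).
Qed.

Lemma first_entrance_mx : (1%:M - K) *m setdiag1 H = diag_mx (\row_j (1 - H j j)).
Proof.
rewrite mulmxBl mul1mx mulmx_setdiag1; apply/matrixP => i j; rewrite !mxE.
by case: (eqVneq i j) => [->|ij]; rewrite ?eqxx ?mulr1n ?subrr // (negPf ij) mulr0n.
Qed.

Lemma det_setdiag1_neq0 : (forall j, H j j != 1) -> \det (setdiag1 H) != 0.
Proof.
move=> Hjj; apply/eqP => det0; have := congr1 determinant first_entrance_mx.
rewrite det_mulmx det0 mulr0 det_diag => /esym/eqP; apply/negP/prodf_neq0 => j _.
by rewrite mxE subr_eq0 eq_sym.
Qed.

End first_entrance_matrices.

Lemma det_mulmx_eq0 (F : fieldType) (N : nat) (A B : 'M[F]_N) :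
  \det B != 0 -> \det (A *m B) = 0 <-> \det A = 0.
Proof.
move=> detB; rewrite det_mulmx; split => [/eqP|->]; rewrite ?mul0r //.
by rewrite mulf_eq0 (negPf detB) orbF => /eqP.
Qed.

Section catalysts.
Context {R : realType} {S : countType} (q : S -> S -> R) (lam : R).
Hypothesis qdiag_lt0 : forall u, q u u < 0.
Hypothesis qoffdiag_ge0 : forall u v, u <> v -> 0 <= q u v.
Hypothesis lam_ge0 : 0 <= lam.
Hypothesis q_conservative : forall u,
  (\esum_(v in [set v | v <> u]) (q u v)%:E)%E = (- q u u)%:E.
Variables (N : nat) (w : 'I_N -> S) (beta alpha : 'I_N -> R) (p : 'I_N -> nat -> R).
Hypothesis w_inj : injective w.
Hypothesis Fstar_wjj_lt1 : forall j, Fstar q (w j) (w j) lam < 1.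

Local Notation taboo A := (pathsum q lam (seqs_in A)).

Definition Fmx : 'M[R]_N := \matrix_(i, j) Fstar q (w i) (w j) lam.
Definition Kmx : 'M[R]_N := \matrix_(i, j) tabooF q (Wminus w j) (w i) (w j) lam.

Let offW : set S := [set x | forall k, x <> w k].

Lemma Kmx_taboo i j : Kmx i j = fine (taboo offW (w i) (w j)).
Proof.
rewrite mxE tabooF_taboo //; congr (fine (pathsum _ _ (seqs_in _) _ _)).
apply/seteqP; split => x /= => [[xW xj] k|xW].
  by have [->//|kj] := eqVneq k j; move=> xk; apply: xW; exists k.
by split => [[k [_ xk]]|]; [exact: (xW k xk)|exact: (xW j)].
Qed.

Lemma Fmx_first_entrance i j :
  Fmx i j = Kmx i j + \sum_(k | k != j) Kmx i k * Fmx k j.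
Proof.
have offW_sub k : offW `<=` ~` [set w k] by move=> x /(_ k).
have Kfin k : taboo offW (w i) (w k) = (Kmx i k)%:E.
  by rewrite Kmx_taboo fineK // taboo_fin_num.
have Ffin k : taboo (~` [set w j]) (w k) (w j) = (Fmx k j)%:E.
  by rewrite mxE Fstar_taboo // fineK ?taboo_fin_num.
have Wj : ~` [set w j] `\` offW = w @` [set k | k != j].
  apply/seteqP; split => x /= => [[xj /existsNP[k /contrapT xk]]|[k kj <-]].
    by exists k => //; apply: contra_notN xj => /eqP kj; rewrite xk kj.
  by split => [/w_inj/eqP|/(_ k)]; rewrite ?(negPf kj).
have := taboo_first_exit qdiag_lt0 qoffdiag_ge0 lam_ge0 (w i) (w j) (offW_sub j).
rewrite Wj esum_image; last by move=> a b _ _ /w_inj.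
rewrite esum_fset; last 2 first.
- exact: finite_finset.
- by move=> k _; rewrite mule_ge0 ?pathsum_ge0.
rewrite -(@bigfs _ _ _ _ (index_enum 'I_N) (fun k => k != j)) ?index_enum_uniq //;
  last by move=> k _; rewrite mem_index_enum.
under eq_bigr => k _ do rewrite Kfin Ffin -EFinM.
by rewrite Ffin Kfin sumEFin -EFinD => -[].
Qed.

Definition coefA i := alpha i * mf p i * Gstar (beta i) lam - 1.
Definition coefB i :=
  (1 - alpha i) * Gstar (beta i) lam * ((lam - q (w i) (w i)) / - q (w i) (w i)).

Lemma Dmat_sub1 : Dmat w beta alpha p q lam - 1%:M
  = diag_mx (\row_i coefA i) + diag_mx (\row_i coefB i) *m Kmx.
Proof.
rewrite mul_diag_mx; apply/matrixP => i j; rewrite !mxE /coefA /coefB /tabooF.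
have q_neq0 : q (w i) (w i) != 0 by rewrite lt_eqF.
have a_neq0 : lam - q (w i) (w i) != 0 by rewrite gt_eqF ?lam_subq_gt0.
have [<-|ij] := eqVneq i j; rewrite ?eqxx ?(negPf ij) ?mulr1n ?mulr0n /=;
  by field; rewrite q_neq0 a_neq0.
Qed.

Lemma Dtilde_eq : Dtilde w beta alpha p q lam
  = (Dmat w beta alpha p q lam - 1%:M) *m setdiag1 Fmx.
Proof.
rewrite Dmat_sub1 mulmxDl -mulmxA (mulmx_setdiag1 Fmx_first_entrance).
rewrite !mul_diag_mx; apply/matrixP => i j; rewrite !mxE /Defs.coef /coefA /coefB.
by have [<-|ij] := eqVneq i j; rewrite ?eqxx ?(negPf ij) ?mulr1n ?mulr0n /=; ring.
Qed.

Lemma Dhat_eq : Dhat w beta alpha p q lam = Dtilde w beta alpha p q lam *m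
  diag_mx (\row_j ((lam - q (w j) (w j)) * (1 - Fmx j j))^-1).
Proof.
rewrite mul_mx_diag; apply/matrixP => i j; rewrite !mxE.
rewrite Green_eq ?Fstar_wjj_lt1 // (inj_eq w_inj) /Defs.coef.
have q_neq0 : q (w i) (w i) != 0 by rewrite lt_eqF.
have a_neq0 k : lam - q (w k) (w k) != 0 by rewrite gt_eqF ?lam_subq_gt0.
have F_neq1 k : 1 - Fstar q (w k) (w k) lam != 0 by rewrite subr_eq0 gt_eqF.
have [<-|ij] := eqVneq i j; rewrite ?eqxx ?(negPf ij) ?mulr1n ?mulr0n /=.
  by field; rewrite q_neq0 a_neq0 F_neq1.
by field; rewrite a_neq0 F_neq1.
Qed.

Lemma det_Dmat_Dtilde_Dhat :
  (\det (Dmat w beta alpha p q lam - 1%:M) = 0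
     <-> \det (Dtilde w beta alpha p q lam) = 0) /\
  (\det (Dtilde w beta alpha p q lam) = 0
     <-> \det (Dhat w beta alpha p q lam) = 0).
Proof.
split; [rewrite Dtilde_eq|rewrite Dhat_eq]; apply: iff_sym; apply: det_mulmx_eq0.
  by apply: (det_setdiag1_neq0 Fmx_first_entrance) => j; rewrite mxE lt_eqF.
rewrite det_diag; apply/prodf_neq0 => j _; rewrite !mxE invr_eq0 mulf_neq0 //.
  by rewrite gt_eqF ?lam_subq_gt0.
by rewrite subr_eq0 gt_eqF.
Qed.

End catalysts.

Theorem lemma5 (R : realType) (S : countType) (q : S -> S -> R)
  (N : nat) (w : 'I_N -> S) (beta alpha : 'I_N -> R) (p : 'I_N -> nat -> R) :
  conservative q -> irreducible q ->
  injective w ->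
  (forall k, 0 < beta k) ->
  (forall k, 0 <= alpha k < 1) ->
  (forall k, is_pmf (p k)) ->
  (forall k, (fprime1 (p k) < +oo)%E) ->
  let P := fun lam : R =>
    (\det (Dmat w beta alpha p q lam - 1%:M) = 0
       <-> \det (Dtilde w beta alpha p q lam) = 0) /\
    (\det (Dtilde w beta alpha p q lam) = 0
       <-> \det (Dhat w beta alpha p q lam) = 0) in
  (forall lam : R, 0 < lam -> P lam) /\ (transient q -> P 0).
Proof.
move=> [qoffdiag_ge0 qdiag_lt0 q_cons] _ w_inj _ _ _ _ P.
split => [lam lam_gt0|transient_q].
  have lam_ge0 := ltW lam_gt0.
  apply: det_Dmat_Dtilde_Dhat => // j.
  apply: le_lt_trans (Fstar_le_hold qdiag_lt0 qoffdiag_ge0 lam_ge0 q_cons _ _) _.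
  by rewrite ltr_pdivrMr ?lam_subq_gt0 // mul1r ltrDr.
exact: det_Dmat_Dtilde_Dhat.
Qed.
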